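(* Let $\Gamma=(V,E)$ be a finite graph, $\{G_v\}_{v\in V}$ a collection of non-trivial finitely generated abelian groups, and $G=W(\Gamma,\{G_v\}_{v\in V})$ their graph product. Assume that every vertex $v$ with $st(v)=V$ has finite vertex group $G_v$. Then $[\mathrm{Aut}(G),G]$ is a subgroup of finite index in $G$. Moreover, if no vertex $v\in V$ satisfies $st(v)=V$ and every vertex group $G_v$ is finite of odd order (i.e. no element of any vertex group has infinite order or order a power of $2$ other than $1$), then $[\mathrm{Aut}(G),G]=G$.
   Context: Graph: $\Gamma=(V,E)$, $V$ non-empty finite, $E$ a set of 2-element subsets; $lk(v)=\{x:\{v,x\}\in E\}$, $st(v)=lk(v)\cup\{v\}$. Graph product: $(\ast_{v}G_v)/N$ with $N$ normally generated by $[G_x,G_y]$, $\{x,y\}\in E$. $[\mathrm{Aut}(G),G]$ denotes the subgroup of $G$ generated by all elements $\varphi(g)g^{-1}$ with $\varphi\in\mathrm{Aut}(G)$, $g\in G$ (this corresponds to the commutators $[\varphi,c_g]=c_{\varphi(g)g^{-1}}$ in $\mathrm{Aut}(G)$, where $c_g$ is conjugation by $g$). *)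

From mathcomp Require Import all_boot.
From Stdlib Require Import List.

Set Implicit Arguments.
Unset Strict Implicit.
Unset Printing Implicit Defensive.

Record AGroup := {
  carrier :> Type;
  gmul : carrier -> carrier -> carrier;
  ginv : carrier -> carrier;
  gone : carrier;
  gmulA : forall x y z, gmul x (gmul y z) = gmul (gmul x y) z;
  gmul1 : forall x, gmul gone x = x;
  gmulV : forall x, gmul (ginv x) x = gone
}.

Arguments gmul {G} : rename.
Arguments ginv {G} : rename.
Arguments gone {G} : rename.

Definition is_hom (G H : AGroup) (f : G -> H) : Prop :=
  forall x y : G, f (gmul x y) = gmul (f x) (f y).

Definition is_aut (G : AGroup) (f : G -> G) : Prop :=
  is_hom f /\ exists g : G -> G, (forall x, g (f x) = x) /\ (forall x, f (g x) = x).

Definition generated (G : AGroup) (S : G -> Prop) : G -> Prop :=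
  fun g => exists l : list (bool * G),
    List.Forall (fun p => S (snd p)) l /\
    g = List.fold_right
          (fun p acc => gmul (if fst p then snd p else ginv (snd p)) acc) gone l.

Definition aut_comm (G : AGroup) : G -> Prop :=
  generated (fun x : G => exists (phi : G -> G) (g : G),
                 is_aut phi /\ x = gmul (phi g) (ginv g)).

Definition finite_index (G : AGroup) (K : G -> Prop) : Prop :=
  exists reps : list G, forall g : G, exists r, List.In r reps /\ K (gmul (ginv r) g).

Definition abelian_group (G : AGroup) : Prop := forall x y : G, gmul x y = gmul y x.

Definition finitely_generated (G : AGroup) : Prop :=
  exists l : list G, forall g : G, generated (fun x => List.In x l) g.

Definition nontrivial_group (G : AGroup) : Prop := exists x : G, x <> gone.

Definition finite_group (G : AGroup) : Prop :=
  exists l : list G, forall x : G, List.In x l.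

Definition odd_order_group (G : AGroup) : Prop :=
  exists l : list G, List.NoDup l /\ (forall x : G, List.In x l) /\ Nat.odd (length l).

(* Simple graph on a finite vertex type: e symmetric, irreflexive.
   st(v) = V  iff every vertex is v or adjacent to v. *)
Definition star_is_all (V : finType) (e : rel V) (v : V) : Prop :=
  forall w : V, w = v \/ e v w.

(* G with maps iota_v : G_v -> G is the graph product W(Gamma, {G_v}):
   characterized (up to isomorphism) by the universal property of the
   quotient (free product of the G_v) / << [G_x, G_y] : {x,y} in E >>. *)
Definition is_graph_product (V : finType) (e : rel V) (Gv : V -> AGroup)
    (G : AGroup) (iota : forall v, Gv v -> G) : Prop :=
  (forall v, is_hom (iota v)) /\
  (forall v w, e v w -> forall (x : Gv v) (y : Gv w),
       gmul (iota v x) (iota w y) = gmul (iota w y) (iota v x)) /\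
  (forall (H : AGroup) (f : forall v, Gv v -> H),
      (forall v, is_hom (f v)) ->
      (forall v w, e v w -> forall (x : Gv v) (y : Gv w),
           gmul (f v x) (f w y) = gmul (f w y) (f v x)) ->
      exists phi : G -> H,
        (is_hom phi /\ forall v (x : Gv v), phi (iota v x) = f v x) /\
        (forall psi : G -> H, is_hom psi -> (forall v (x : Gv v), psi (iota v x) = f v x) ->
           forall g, psi g = phi g)).
Arguments is_graph_product {V} e Gv G iota.
Arguments aut_comm G : clear implicits.
Arguments finite_index {G} K.
Arguments star_is_all {V} e v.

(* Inner automorphisms put every commutator into K := [Aut(G), G], and since
   the vertex groups are abelian, inverting every vertex group extends to an
   automorphism theta of G, so that theta(x) x^-1 = x^-2 puts the square of
   every vertex element into K as well.  Hence G/K is an abelian group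
   generated by finitely many elements of order at most 2, so it has at most
   2^n elements.  If every vertex group has odd order, every vertex element is
   a square, so K contains a generating set of G and K = G. *)

From Stdlib Require Import List ProofIrrelevance Permutation PeanoNat.
From mathcomp Require Import all_boot zify.

Local Notation "x ⋅ y" := (gmul x y) (at level 40, left associativity).

Section GroupLaws.
Variable G : AGroup.
Implicit Types x y z : G.

Lemma mulgV x : x ⋅ ginv x = gone.
Proof.
rewrite -[x ⋅ ginv x]gmul1 -[in X in X ⋅ (x ⋅ _)](gmulV (ginv x)).
by rewrite -gmulA [ginv x ⋅ (x ⋅ ginv x)]gmulA gmulV gmul1 gmulV.
Qed.

Lemma mulg1 x : x ⋅ gone = x.
Proof. by rewrite -(gmulV x) gmulA mulgV gmul1. Qed.

Lemma mulgI x y z : x ⋅ y = x ⋅ z -> y = z.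
Proof. by move=> E; rewrite -(gmul1 y) -(gmulV x) -gmulA E gmulA gmulV gmul1. Qed.

Lemma invg_unique x y : x ⋅ y = gone -> x = ginv y.
Proof. by move=> E; rewrite -(mulg1 x) -(mulgV y) gmulA E gmul1. Qed.

Lemma invgK x : ginv (ginv x) = x.
Proof. by symmetry; apply: invg_unique; apply: mulgV. Qed.

Lemma invgM x y : ginv (x ⋅ y) = ginv y ⋅ ginv x.
Proof.
symmetry; apply: invg_unique.
by rewrite -gmulA [ginv x ⋅ (x ⋅ y)]gmulA gmulV gmul1 gmulV.
Qed.

Lemma invg1 : ginv (@gone G) = gone.
Proof. by symmetry; apply: invg_unique; apply: gmul1. Qed.

Lemma mulKg x y : ginv x ⋅ (x ⋅ y) = y.
Proof. by rewrite gmulA gmulV gmul1. Qed.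

Lemma mulKVg x y : x ⋅ (ginv x ⋅ y) = y.
Proof. by rewrite gmulA mulgV gmul1. Qed.

Lemma mulgK x y : x ⋅ y ⋅ ginv y = x.
Proof. by rewrite -gmulA mulgV mulg1. Qed.

Lemma mulgKV x y : x ⋅ ginv y ⋅ y = x.
Proof. by rewrite -gmulA gmulV mulg1. Qed.

End GroupLaws.

Section Generated.
Variable G : AGroup.
Implicit Types (S T : G -> Prop) (x y : G).

Lemma generated_ind S (P : G -> Prop) :
  P gone -> (forall s x, S s -> P x -> P (s ⋅ x)) ->
  (forall s x, S s -> P x -> P (ginv s ⋅ x)) ->
  forall g, generated S g -> P g.
Proof.
move=> P1 PM PV g [l [Sl ->]].
by elim: l Sl => [|[[] s] l IHl] Sl //=; inversion Sl; subst; auto.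
Qed.

Lemma generated1 S : generated S gone.
Proof. by exists nil. Qed.

Lemma generated_mem S x : S x -> generated S x.
Proof. by move=> Sx; exists ((true, x) :: nil); split; [constructor | rewrite /= mulg1]. Qed.

Lemma generatedV_mem S x : S x -> generated S (ginv x).
Proof. by move=> Sx; exists ((false, x) :: nil); split; [constructor | rewrite /= mulg1]. Qed.

Lemma generatedM S x y : generated S x -> generated S y -> generated S (x ⋅ y).
Proof.
move=> Sx Sy; move: x Sx; apply: generated_ind; first by rewrite gmul1.
- move=> s x Ss [l [Sl E]]; exists ((true, s) :: l); split; first by constructor.
  by rewrite /= -E gmulA.
- move=> s x Ss [l [Sl E]]; exists ((false, s) :: l); split; first by constructor.
  by rewrite /= -E gmulA.
Qed.

Lemma generatedV S x : generated S x -> generated S (ginv x).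
Proof.
move: x; apply: generated_ind; first by rewrite invg1; apply: generated1.
- move=> s x Ss Sx; rewrite invgM; apply: generatedM => //; exact: generatedV_mem.
- move=> s x Ss Sx; rewrite invgM invgK; apply: generatedM => //; exact: generated_mem.
Qed.

Lemma generated_sub S T :
  (forall x, S x -> generated T x) -> forall g, generated S g -> generated T g.
Proof.
move=> ST; apply: generated_ind; first exact: generated1.
- by move=> s x Ss Tx; apply: generatedM => //; apply: ST.
- by move=> s x Ss Tx; apply: generatedM => //; apply: generatedV; apply: ST.
Qed.

End Generated.

Arguments generated1 {G S}.
Arguments generated_mem {G S x}.
Arguments generatedM {G S x y}.
Arguments generatedV {G S x}.
Arguments generated_sub {G S T}.

Lemma generated_val_inj (G : AGroup) (S : G -> Prop) (a b : {g : G | generated S g}) :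
  proj1_sig a = proj1_sig b -> a = b.
Proof. by apply: eq_sig_hprop => x; apply: proof_irrelevance. Qed.

Definition generated_group {G : AGroup} (S : G -> Prop) : AGroup.
Proof.
refine {| carrier := {g : G | generated S g};
          gmul a b := exist _ (proj1_sig a ⋅ proj1_sig b) (generatedM (proj2_sig a) (proj2_sig b));
          ginv a := exist _ (ginv (proj1_sig a)) (generatedV (proj2_sig a));
          gone := exist _ gone generated1 |}.
- by move=> a b c; apply: generated_val_inj; apply: gmulA.
- by move=> a; apply: generated_val_inj; apply: gmul1.
- by move=> a; apply: generated_val_inj; apply: gmulV.
Defined.

Section Homomorphisms.
Variables (G H : AGroup) (f : G -> H).
Hypothesis f_hom : is_hom f.

Lemma hom1 : f gone = gone.
Proof. by apply: (@mulgI _ (f gone)); rewrite -f_hom gmul1 mulg1. Qed.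

Lemma homV x : f (ginv x) = ginv (f x).
Proof. by apply: invg_unique; rewrite -f_hom gmulV hom1. Qed.

Lemma generated_hom (S : G -> Prop) x :
  generated S x -> generated (fun y => exists2 z, S z & y = f z) (f x).
Proof.
move: x; apply: generated_ind; first by rewrite hom1; apply: generated1.
- by move=> s x Ss fx; rewrite f_hom; apply: generatedM => //; apply: generated_mem; exists s.
- move=> s x Ss fx; rewrite f_hom homV; apply: generatedM => //.
  by apply: generatedV_mem; exists s.
Qed.

End Homomorphisms.

Arguments homV {G H f} f_hom x.
Arguments generated_hom {G H f} f_hom {S x}.

Section QuotientByInvolutions.
Context {G : AGroup} {K : G -> Prop}.
Hypothesis K1 : K gone.
Hypothesis KM : forall x y, K x -> K y -> K (x ⋅ y).
Hypothesis KV : forall x, K x -> K (ginv x).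
Hypothesis K_commutator : forall x y : G, K (x ⋅ y ⋅ ginv x ⋅ ginv y).

Let eqK (x y : G) := K (ginv x ⋅ y).

Lemma eqK_refl x : eqK x x.
Proof. by rewrite /eqK gmulV. Qed.

Lemma eqK_sym {x y} : eqK x y -> eqK y x.
Proof. by move=> /KV; rewrite invgM invgK. Qed.

Lemma eqK_trans {x y z} : eqK x y -> eqK y z -> eqK x z.
Proof. by move=> xy /(KM _ _ xy); rewrite -gmulA mulKVg. Qed.

Lemma eqK_mull z {x y} : eqK x y -> eqK (z ⋅ x) (z ⋅ y).
Proof. by rewrite /eqK invgM -gmulA mulKg. Qed.

(* z^-1 k z = k [k^-1, z^-1] with k := x^-1 y. *)
Lemma eqK_mulr z {x y} : eqK x y -> eqK (x ⋅ z) (y ⋅ z).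
Proof.
rewrite /eqK => xy; set k := ginv x ⋅ y in xy *.
have -> : ginv (x ⋅ z) ⋅ (y ⋅ z) = k ⋅ (ginv k ⋅ ginv z ⋅ ginv (ginv k) ⋅ ginv (ginv z)).
  by rewrite !invgK !gmulA mulgV gmul1 /k invgM.
exact: KM.
Qed.

Lemma eqK_mulC x y : eqK (x ⋅ y) (y ⋅ x).
Proof. by rewrite /eqK invgM !gmulA; have := K_commutator (ginv y) (ginv x); rewrite !invgK. Qed.

Fixpoint subproducts (L : list G) : list G :=
  if L is b :: L' then subproducts L' ++ map (gmul b) (subproducts L') else gone :: nil.

Lemma subproducts1 L : In gone (subproducts L).
Proof. by elim: L => [|b L IHL] /=; [left | apply: in_or_app; left]. Qed.

Context {L : list G}.
Hypothesis L_square : forall b, In b L -> K (b ⋅ b).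

Lemma subproducts_mul {a r} : In a L -> In r (subproducts L) ->
  exists2 r', In r' (subproducts L) & eqK r' (a ⋅ r).
Proof.
elim: L L_square a r => [|b L' IHL] //= L'_square a r La Lr.
have {}IHL := IHL (fun c Lc => L'_square c (or_intror Lc)).
case: (in_app_or _ _ _ Lr) => [r_L' | /in_map_iff [r0 [<- r0_L']]].
- case: La => [<- | a_L'].
  + by exists (b ⋅ r); [apply: in_or_app; right; apply: in_map | apply: eqK_refl].
  + have [r' r'_L' r'a] := IHL a r a_L' r_L'.
    by exists r' => //; apply: in_or_app; left.
- case: La => [<- | a_L'].
  + exists r0; first by apply: in_or_app; left.
    rewrite gmulA -{1}(gmul1 r0); apply: eqK_mulr.
    by rewrite /eqK invg1 gmul1; apply: L'_square; left.
  + have [r' r'_L' r'a] := IHL a r0 a_L' r0_L'.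
    exists (b ⋅ r'); first by apply: in_or_app; right; apply: in_map.
    apply: eqK_trans (eqK_mull b r'a) _; rewrite !gmulA; apply: eqK_mulr.
    exact: eqK_mulC.
Qed.

Lemma eqK_subproduct {g} : generated (fun x => In x L) g ->
  exists2 r, In r (subproducts L) & eqK r g.
Proof.
move: g; apply: generated_ind.
- by exists gone; [apply: subproducts1 | apply: eqK_refl].
- move=> s x Ls [r r_L rx]; have [r' r'_L r's] := subproducts_mul Ls r_L.
  by exists r' => //; apply: eqK_trans r's _; apply: eqK_mull.
- move=> s x Ls [r r_L rx]; have [r' r'_L r's] := subproducts_mul Ls r_L.
  exists r' => //; apply: eqK_trans r's _; apply: eqK_trans (eqK_mull s rx) _.
  by apply: eqK_mulr; apply: eqK_sym; rewrite /eqK invgK; apply: L_square.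
Qed.

Lemma finite_index_of_involution_generators :
  (forall g, generated (fun x => In x L) g) -> finite_index K.
Proof.
move=> L_gen; exists (subproducts L) => g.
by have [r r_L rg] := eqK_subproduct (L_gen g); exists r.
Qed.

End QuotientByInvolutions.

Section OddOrder.
Context {G : AGroup}.
Hypothesis G_abelian : abelian_group G.

Definition gprod (l : list G) : G := fold_right gmul gone l.

Fixpoint gpow (y : G) (n : nat) : G := if n is n'.+1 then y ⋅ gpow y n' else gone.

Lemma gpowD y m n : gpow y (m + n) = gpow y m ⋅ gpow y n.
Proof. by elim: m => [|m IHm] /=; rewrite ?gmul1 // IHm gmulA. Qed.

Lemma gprod_perm {l l'} : Permutation l l' -> gprod l = gprod l'.
Proof.
elim=> //= [x l1 l2 _ -> | x y l0 | l1 l2 l3 _ -> _ ->] //.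
by rewrite !gmulA (G_abelian x y).
Qed.

Lemma gprod_map_mul y l : gprod (map (gmul y) l) = gpow y (length l) ⋅ gprod l.
Proof.
elim: l => [|z l IHl] /=; first by rewrite gmul1.
by rewrite IHl !gmulA -[y ⋅ z ⋅ _]gmulA (G_abelian z) !gmulA.
Qed.

(* Translation by y permutes an enumeration of G, so y^|G| times the product of
   all elements is that same product. *)
Lemma gpow_card y (l : list G) : NoDup l -> (forall x, In x l) -> gpow y (length l) = gone.
Proof.
move=> l_uniq l_all.
have l_perm : Permutation l (map (gmul y) l).
  apply: NoDup_Permutation => //.
  - by apply: FinFun.Injective_map_NoDup => // a b; apply: mulgI.
  - move=> x; split=> _; last exact: l_all.
    by apply/in_map_iff; exists (ginv y ⋅ x); split; [apply: mulKVg | apply: l_all].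
apply: (@mulgI _ (gprod l)).
by rewrite mulg1 G_abelian -gprod_map_mul -(gprod_perm l_perm).
Qed.

Lemma odd_order_square (y : G) : odd_order_group G -> exists z, y = z ⋅ z.
Proof.
move=> [l [l_uniq [l_all l_odd]]].
have [m l_size] : exists m, length l = (2 * m + 1)%coq_nat by apply/Nat.odd_spec.
exists (gpow y m.+1); rewrite -gpowD.
have -> : (m.+1 + m.+1 = (length l).+1)%N by rewrite l_size; lia.
by rewrite /= gpow_card // mulg1.
Qed.

End OddOrder.

Lemma conjg_is_aut (G : AGroup) (a : G) : is_aut (fun g => a ⋅ g ⋅ ginv a).
Proof.
split; first by move=> x y; rewrite !gmulA mulgKV.
exists (fun g => ginv a ⋅ g ⋅ a); split=> x.
- by rewrite !gmulA gmulV gmul1 mulgKV.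
- by rewrite !gmulA mulgV gmul1 mulgK.
Qed.

Lemma aut_comm_commutator (G : AGroup) (x y : G) : aut_comm G (x ⋅ y ⋅ ginv x ⋅ ginv y).
Proof.
by apply: generated_mem; exists (fun g => x ⋅ g ⋅ ginv x), y; split; first exact: conjg_is_aut.
Qed.

Section GraphProduct.
Context {V : finType} {e : rel V} {Gv : V -> AGroup} {G : AGroup}.
Context {iota : forall v, Gv v -> G}.
Hypothesis hG : is_graph_product e Gv G iota.

Lemma iota_hom v : is_hom (iota v).
Proof. by case: hG. Qed.

Lemma graph_product_lift {H : AGroup} {f : forall v, Gv v -> H} :
  (forall v, is_hom (f v)) ->
  (forall v w, e v w -> forall (x : Gv v) (y : Gv w), f v x ⋅ f w y = f w y ⋅ f v x) ->
  exists2 phi : G -> H, is_hom phi & forall v x, phi (iota v x) = f v x.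
Proof.
case: hG => _ [_ lift] f_hom f_comm.
by have [phi [[]]] := lift H f f_hom f_comm; exists phi.
Qed.

Lemma graph_product_endo_id (h : G -> G) :
  is_hom h -> (forall v x, h (iota v x) = iota v x) -> forall g, h g = g.
Proof.
case: hG => iota_hom' [iota_comm lift] h_hom h_iota g.
have [phi [_ phi_unique]] := lift G iota iota_hom' iota_comm.
rewrite (phi_unique h h_hom h_iota).
by rewrite -(phi_unique (fun x => x) (fun _ _ => erefl) (fun _ _ => erefl)).
Qed.

Definition vertex_element (g : G) : Prop := exists v x, g = iota v x.

Lemma graph_product_generated_by_vertices g : generated vertex_element g.
Proof.
pose K := generated_group vertex_element.
pose incl v (x : Gv v) : K :=
  exist _ (iota v x) (generated_mem (S := vertex_element) (ex_intro _ v (ex_intro _ x erefl))).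
have incl_hom v : is_hom (incl v).
  by move=> x y; apply: generated_val_inj; apply: iota_hom.
have incl_comm v w : e v w -> forall x y, incl v x ⋅ incl w y = incl w y ⋅ incl v x.
  by case: hG => _ [iota_comm _] vw x y; apply: generated_val_inj; apply: iota_comm.
have [phi phi_hom phi_iota] := graph_product_lift incl_hom incl_comm.
have phi_id : forall g, proj1_sig (phi g) = g.
  apply: graph_product_endo_id; first by move=> a b; rewrite phi_hom.
  by move=> v x; rewrite phi_iota.
by rewrite -(phi_id g); apply: proj2_sig.
Qed.

Section FinitelyGenerated.
Hypothesis Gv_fg : forall v, finitely_generated (Gv v).

Lemma vertex_generators_on (s : seq V) : exists L : list G,
  (forall a, In a L -> vertex_element a) /\
  forall v, v \in s -> forall x, generated (fun y => In y L) (iota v x).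
Proof.
elim: s => [|v s [L [L_vertex L_gen]]]; first by exists nil.
have [lv lv_gen] := Gv_fg v.
exists (map (iota v) lv ++ L); split.
- move=> a a_L; case: (in_app_or _ _ _ a_L) => [/in_map_iff [x [<- _]] | /L_vertex //].
  by exists v, x.
- move=> w; rewrite inE => /orP [/eqP -> | s_w] x.
  + apply: generated_sub (generated_hom (iota_hom v) (lv_gen x)) => _ [y lv_y ->].
    by apply: generated_mem; apply: in_or_app; left; apply: in_map.
  + apply: generated_sub (L_gen w s_w x) => y L_y.
    by apply: generated_mem; apply: in_or_app; right.
Qed.

Lemma graph_product_finite_vertex_generators : exists L : list G,
  (forall a, In a L -> vertex_element a) /\ forall g, generated (fun y => In y L) g.
Proof.
have [L [L_vertex L_gen]] := vertex_generators_on (enum V).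
exists L; split=> // g.
apply: generated_sub (graph_product_generated_by_vertices g) => _ [v [x ->]].
by apply: L_gen; rewrite mem_enum.
Qed.

End FinitelyGenerated.

Section AbelianVertexGroups.
Hypothesis Gv_abelian : forall v, abelian_group (Gv v).

Lemma vertex_inversion_aut : exists2 theta : G -> G,
  is_aut theta & forall v x, theta (iota v x) = iota v (ginv x).
Proof.
have inv_hom v : is_hom (fun x : Gv v => iota v (ginv x)).
  by move=> x y; rewrite -iota_hom invgM Gv_abelian.
have inv_comm v w : e v w -> forall (x : Gv v) (y : Gv w),
    iota v (ginv x) ⋅ iota w (ginv y) = iota w (ginv y) ⋅ iota v (ginv x).
  by case: hG => _ [iota_comm _] vw x y; apply: iota_comm.
have [theta theta_hom theta_iota] := graph_product_lift inv_hom inv_comm.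
have theta_invol g : theta (theta g) = g.
  apply: (graph_product_endo_id (fun g => theta (theta g))).
  - by move=> a b; rewrite !theta_hom.
  - by move=> v x; rewrite !theta_iota invgK.
by exists theta => //; split=> //; exists theta.
Qed.

Lemma aut_comm_vertex_square v (x : Gv v) : aut_comm G (iota v (x ⋅ x)).
Proof.
have [theta theta_aut theta_iota] := vertex_inversion_aut.
apply: generated_mem; exists theta, (iota v (ginv x)); split=> //.
by rewrite theta_iota invgK -(homV (iota_hom v)) invgK iota_hom.
Qed.

End AbelianVertexGroups.

End GraphProduct.

Theorem proposition8p3 (V : finType) (e : rel V)
  (e_sym : forall x y : V, e x y = e y x) (e_irr : forall x : V, e x x = false) (V_ne : 0 < #|V|)
  (Gv : V -> AGroup) (G : AGroup) (iota : forall v, Gv v -> G)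
  (hG : is_graph_product e Gv G iota)
  (hab : forall v, abelian_group (Gv v))
  (hfg : forall v, finitely_generated (Gv v))
  (hnt : forall v, nontrivial_group (Gv v))
  (hcent : forall v, star_is_all e v -> finite_group (Gv v)) :
  finite_index (aut_comm G) /\
  ((forall v, ~ star_is_all e v) -> (forall v, odd_order_group (Gv v)) ->
     forall g : G, aut_comm G g).
Proof.
have vertex_square := aut_comm_vertex_square hG hab.
split.
- have [L [L_vertex L_gen]] := graph_product_finite_vertex_generators hG hfg.
  have L_square b : In b L -> aut_comm G (b ⋅ b).
    by move=> /L_vertex [v [x ->]]; rewrite -(iota_hom hG); apply: vertex_square.
  exact: (finite_index_of_involution_generators generated1 (fun x y => generatedM)
            (fun x => generatedV) (@aut_comm_commutator G) L_square L_gen).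
- move=> _ Gv_odd g.
  apply: generated_sub (graph_product_generated_by_vertices hG g) => _ [v [x ->]].
  have [y ->] := odd_order_square (hab v) x (Gv_odd v).
  exact: vertex_square.
Qed.
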